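(* For every $n\ge 2$, $C(2w_n)=C(2v_{n+1})$, where $w_n=x_1\cdots x_n(x_1^2+1)$ and $v_{n+1}=x_1\cdots x_{n+1}(x_1+x_2)$.
   Context: All operations are on $\mathbb{Z}_8$. For an operation $f$, $C(f)$ denotes the clone generated by $f$ together with binary addition and all unary constant operations. *)

From mathcomp Require Import all_boot all_algebra.
Set Implicit Arguments. Unset Strict Implicit. Unset Printing Implicit Defensive.
Import GRing.Theory.
Local Open Scope ring_scope.

Definition Z8 := 'Z_8.

Definition op (k : nat) := ('I_k -> Z8) -> Z8.

Definition is_clone (C : forall k, op k -> Prop) : Prop :=
  (forall k (i : 'I_k), C k (fun x => x i)) /\
  (forall k m (h : op m) (gs : 'I_m -> op k),
      C m h -> (forall j, C k (gs j)) -> C k (fun x => h (fun j => gs j x))).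

Definition clone_gen (F : forall k, op k -> Prop) (k : nat) (g : op k) : Prop :=
  forall C, is_clone C -> (forall m h, F m h -> C m h) -> C k g.

(** Generators of C(f): f itself, binary addition and all unary constants. *)
Inductive gens (n : nat) (f : op n) : forall m, op m -> Prop :=
| gens_f : gens f f
| gens_add : gens f (fun x : 'I_2 -> Z8 => x ord0 + x ord_max)
| gens_const (c : Z8) : gens f (fun _ : 'I_1 -> Z8 => c).

Definition C_of (n : nat) (f : op n) (k : nat) (g : op k) : Prop :=
  clone_gen (@gens n f) g.

(** The j-th variable (0-based: x_{j+1} in the paper) of a tuple, 0 if absent. *)
Definition var (n : nat) (x : 'I_n -> Z8) (j : nat) : Z8 :=
  nth 0 [seq x i | i <- enum 'I_n] j.

Definition w_op (n : nat) : op n :=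
  fun x => (\prod_(i < n) x i) * (var x 0 ^+ 2 + 1).

Definition v_op (m : nat) : op m :=
  fun x => (\prod_(i < m) x i) * (var x 0 + var x 1).

Definition twice (n : nat) (f : op n) : op n := fun x => 2%:R * f x.

Arguments w_op n : clear implicits.
Arguments v_op m : clear implicits.
Arguments C_of n f k g : clear implicits.

From mathcomp Require Import all_boot all_algebra.
From mathcomp Require Import ring.
From Stdlib Require Import FunctionalExtensionality.
Set Implicit Arguments. Unset Strict Implicit. Unset Printing Implicit Defensive.
Import GRing.Theory.

Local Open Scope ring_scope.

(* Each of 2 w_n and 2 v_(n+1) is a sum of three instances of the other one,
   obtained by substituting for the first variables.  Writing W t := t (t^2+1)
   for the one-variable core of w and R for the product of the untouched
   variables, the two identities modulo 8 behind this are
     2 X Y (X + Y) = 2 W(X) + 2 W(Y) + 2 W(X + Y),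
     2 W(X) Y = 2 v(1, Y, X) + 2 v(1, X, Y) + 2 v(Y, X, X),
   both multiplied by R. *)

Lemma forall2_Zp n (P : 'Z_n.+2 -> 'Z_n.+2 -> bool) :
  all (fun i => all (fun j => P (inZp i) (inZp j)) (iota 0 n.+2)) (iota 0 n.+2) ->
  forall X Y, P X Y.
Proof.
move=> /allP HP X Y.
have iotaP (Z : 'Z_n.+2) : val Z \in iota 0 n.+2 by rewrite mem_iota ltn_ord.
by move: (HP _ (iotaP X)) => /allP /(_ _ (iotaP Y)); rewrite !valZpK.
Qed.

(* The two sides differ by 4 (X (X^2 + 1) + Y (Y^2 + 1) + X Y (X + Y)), which
   vanishes modulo 8 because every summand is even. *)
Lemma Z8_double_mul_add (X Y : Z8) :
  2%:R * (X * Y * (X + Y)) =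
  2%:R * (X * (X ^+ 2 + 1)) + 2%:R * (Y * (Y ^+ 2 + 1))
    + 2%:R * ((X + Y) * ((X + Y) ^+ 2 + 1)).
Proof. by apply/eqP; move: X Y; apply: forall2_Zp; vm_compute. Qed.

Lemma Z8_double_cubic_mul (X Y : Z8) :
  2%:R * (X * (X ^+ 2 + 1) * Y) =
  2%:R * (Y * X * (1 + Y)) + 2%:R * (X * Y * (1 + X)) + 2%:R * (Y * X ^+ 2 * (Y + X)).
Proof. by apply/eqP; move: X Y; apply: forall2_Zp; vm_compute. Qed.

Definition scons m (a : Z8) (x : 'I_m -> Z8) : 'I_m.+1 -> Z8 :=
  fun j => if unlift ord0 j is Some i then x i else a.

Definition stail m (x : 'I_m.+1 -> Z8) : 'I_m -> Z8 := fun i => x (lift ord0 i).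

Lemma sconsK m (x : 'I_m.+1 -> Z8) : scons (x ord0) (stail x) = x.
Proof.
by apply: functional_extensionality => j; rewrite /scons; case: unliftP => [i ->|->].
Qed.

Lemma prod_scons m a (x : 'I_m -> Z8) :
  \prod_(j < m.+1) scons a x j = a * \prod_(i < m) x i.
Proof. by rewrite big_ord_recl /scons unlift_none; under eq_bigr do rewrite liftK. Qed.

Lemma var_scons0 m a (x : 'I_m -> Z8) : var (scons a x) 0 = a.
Proof. by rewrite /var enum_ordSl /= /scons unlift_none. Qed.

Lemma var_sconsS m a (x : 'I_m -> Z8) j : var (scons a x) j.+1 = var x j.
Proof.
by rewrite /var enum_ordSl /= -map_comp; congr nth; apply: eq_map => i /=; rewrite /scons liftK.
Qed.

Lemma w_op_scons m a (x : 'I_m -> Z8) :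
  w_op m.+1 (scons a x) = a * \prod_(i < m) x i * (a ^+ 2 + 1).
Proof. by rewrite /w_op prod_scons var_scons0. Qed.

Lemma v_op_scons2 m a b (x : 'I_m -> Z8) :
  v_op m.+2 (scons a (scons b x)) = a * (b * \prod_(i < m) x i) * (a + b).
Proof. by rewrite /v_op !prod_scons var_scons0 var_sconsS var_scons0. Qed.

Lemma w_opE m (x : 'I_m.+2 -> Z8) :
  w_op m.+2 x =
  x ord0 * (x (lift ord0 ord0) * \prod_(i < m) stail (stail x) i) * (x ord0 ^+ 2 + 1).
Proof. by rewrite -{1}[x]sconsK -{1}[stail x]sconsK w_op_scons prod_scons. Qed.

Lemma v_opE m (y : 'I_m.+2 -> Z8) :
  v_op m.+2 y =
  y ord0 * (y (lift ord0 ord0) * \prod_(i < m) stail (stail y) i)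
    * (y ord0 + y (lift ord0 ord0)).
Proof. by rewrite -{1}[y]sconsK -{1}[stail y]sconsK v_op_scons2. Qed.

Section CloneClosure.
Variable C : forall k, op k -> Prop.
Hypothesis cloneC : is_clone C.

Lemma clone_proj k (i : 'I_k) : C (fun x => x i).
Proof. exact: cloneC.1. Qed.

Lemma clone_ext k (f g : op k) : C f -> f =1 g -> C g.
Proof. by move=> Cf /functional_extensionality <-. Qed.

Lemma clone_comp k m (f : op m) (gs : 'I_m -> op k) :
  C f -> (forall i, C (gs i)) -> C (fun x => f (fun i => gs i x)).
Proof. exact: cloneC.2. Qed.

Lemma clone_scons k m (g : op k) (gs : 'I_m -> op k) :
  C g -> (forall i, C (gs i)) -> forall j, C (fun x => scons (g x) (fun i => gs i x) j).
Proof. by move=> Cg Cgs j; rewrite /scons; case: unlift. Qed.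

Hypothesis C_add : C (fun x : 'I_2 -> Z8 => x ord0 + x ord_max).
Hypothesis C_const : forall c : Z8, C (fun _ : 'I_1 -> Z8 => c).

Lemma clone_add k (f g : op k) : C f -> C g -> C (fun x => f x + g x).
Proof.
move=> Cf Cg; apply: (clone_comp (gs := fun j => if j == ord0 then f else g) C_add).
by move=> j; case: (j == ord0).
Qed.

Lemma clone_const k (c : Z8) : C (fun _ : 'I_k.+1 -> Z8 => c).
Proof. exact: (clone_comp (gs := fun _ x => x ord0) (C_const c)) (fun _ => clone_proj _). Qed.

End CloneClosure.

Lemma clone_gen_gens n (f : op n) (C : forall k, op k -> Prop) :
  is_clone C -> (forall m h, @gens n f m h -> C m h) ->
  [/\ C n f, C 2 (fun x => x ord0 + x ord_max) & forall c : Z8, C 1 (fun _ => c)].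
Proof.
move=> _ Cgens; split; first exact: Cgens (gens_f f).
- exact: Cgens (gens_add f).
- by move=> c; exact: Cgens (gens_const f c).
Qed.

Lemma C_of_sub n1 (f1 : op n1) n2 (f2 : op n2) :
  C_of n1 f1 n2 f2 -> forall k g, C_of n2 f2 k g -> C_of n1 f1 k g.
Proof.
move=> f2_in k g Cg C cloneC Cgens; apply: Cg => // m h [].
- exact: f2_in.
- exact: Cgens _ _ (gens_add _).
- by move=> c; exact: Cgens _ _ (gens_const _ c).
Qed.

Lemma twice_v_in_C_w m : C_of m.+2 (twice (w_op m.+2)) m.+3 (twice (v_op m.+3)).
Proof.
move=> C cloneC /(clone_gen_gens cloneC) [Cw Cadd _].
pose term (t : op m.+3) := fun y => twice (w_op m.+2) (scons (t y) (stail (stail y))).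
have Cterm t : C _ t -> C _ (term t).
  by move=> Ct; apply: (clone_comp cloneC Cw); apply: clone_scons => // i; apply: clone_proj.
have CX := clone_proj cloneC (ord0 : 'I_m.+3).
have CY := clone_proj cloneC (lift ord0 (ord0 : 'I_m.+2)).
apply: clone_ext (clone_add cloneC Cadd (clone_add cloneC Cadd (Cterm _ CX) (Cterm _ CY))
                    (Cterm _ (clone_add cloneC Cadd CX CY))) _ => y.
rewrite /term /twice !w_op_scons v_opE.
set X := y ord0; set Y := y (lift ord0 ord0); set R := \prod_(i < m.+1) _.
transitivity (2%:R * (X * Y * (X + Y)) * R); last by ring.
by rewrite Z8_double_mul_add; ring.
Qed.

Lemma twice_w_in_C_v m : C_of m.+3 (twice (v_op m.+3)) m.+2 (twice (w_op m.+2)).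
Proof.
move=> C cloneC /(clone_gen_gens cloneC) [Cv Cadd Cconst].
pose term (a b c : op m.+2) :=
  fun x => twice (v_op m.+3) (scons (a x) (scons (b x) (scons (c x) (stail (stail x))))).
have Cterm a b c : C _ a -> C _ b -> C _ c -> C _ (term a b c).
  move=> Ca Cb Cc; apply: (clone_comp cloneC Cv).
  apply: (clone_scons (gs := fun i x => scons (b x) (scons (c x) (stail (stail x))) i)) => //.
  apply: (clone_scons (gs := fun i x => scons (c x) (stail (stail x)) i)) => //.
  by apply: clone_scons => // i; apply: clone_proj.
have CX := clone_proj cloneC (ord0 : 'I_m.+2).
have CY := clone_proj cloneC (lift ord0 (ord0 : 'I_m.+1)).
have C1 := clone_const cloneC Cconst m.+1 1.
apply: clone_ext (clone_add cloneC Cadd (clone_add cloneC Cadd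
                    (Cterm _ _ _ C1 CY CX) (Cterm _ _ _ C1 CX CY)) (Cterm _ _ _ CY CX CX)) _ => x.
rewrite /term /twice !v_op_scons2 !prod_scons w_opE.
set X := x ord0; set Y := x (lift ord0 ord0); set R := \prod_(i < m) _.
transitivity (2%:R * (X * (X ^+ 2 + 1) * Y) * R); last by ring.
by rewrite Z8_double_cubic_mul; ring.
Qed.

Local Close Scope ring_scope.

Theorem lemma4p5 (n : nat) (hn : 2 <= n) :
  forall (k : nat) (g : op k),
    C_of n (twice (w_op n)) k g <-> C_of n.+1 (twice (v_op n.+1)) k g.
Proof.
case: n hn => [|[|m]] // _ k g; split.
- exact: C_of_sub (@twice_w_in_C_v m) k g.
- exact: C_of_sub (@twice_v_in_C_w m) k g.
Qed.
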